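(* Let $H=\sum_{i,j=1}^n\left(\tfrac12\mu_{ij}p_ip_j+\tfrac12\kappa_{ij}q_iq_j+\tfrac12\gamma_{ij}p_iq_j+\tfrac12\gamma_{ji}q_ip_j\right)$ with $\mu,\kappa$ real symmetric, $\gamma$ real, and Hermitian $p_i,q_i$ satisfying $[p_i,q_j]=-i\delta_{ij}$, $[p_i,p_j]=[q_i,q_j]=0$. If $H$ is Dirac diagonalizable, then its dynamic matrix $D=\Sigma_yM$ is physically diagonalizable.
   Context: $M=\begin{pmatrix}\mu&\gamma\\ \gamma^T&\kappa\end{pmatrix}$, $\Sigma_y=\begin{pmatrix}0&-iI_n\\ iI_n&0\end{pmatrix}$. $H$ is Dirac diagonalizable if there exist operators $d_1,\dots,d_n$, each a complex linear combination of the $p_i,q_i$, with $[d_i,d_j^\dagger]=\delta_{ij}$, $[d_i,d_j]=0$, and real $\omega_1,\dots,\omega_n,C$ with $H=\sum_i\omega_id_i^\dagger d_i+C$. A matrix is physically diagonalizable if it is diagonalizable over $\mathbb{C}$ and all its eigenvalues are real. *)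

From HB Require Import structures.
From mathcomp Require Import all_boot all_order all_algebra.
Set Implicit Arguments. Unset Strict Implicit. Unset Printing Implicit Defensive.
Import Order.TTheory GRing.Theory Num.Theory.
Local Open Scope ring_scope.

(* Abstract setting: a (nontrivial, unital) complex *-algebra A in which the
   p_i, q_i live.  C is any numeric algebraically closed field (e.g. algC or
   complex R), with complex conjugation Num.conj , written x^* . *)

Definition is_star (C : numClosedFieldType) (A : algType C) (star : A -> A) :=
  [/\ forall x y, star (x + y) = star x + star y,
      forall (a : C) x, star (a *: x) = a^* *: star x,
      forall x y, star (x * y) = star y * star x
    & forall x, star (star x) = x].

Definition comm (C : numClosedFieldType) (A : algType C) (x y : A) : A :=
  x * y - y * x.

Definition CCR (C : numClosedFieldType) (A : algType C) (star : A -> A)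
  (n : nat) (p q : 'I_n -> A) :=
  [/\ forall i, star (p i) = p i,
      forall i, star (q i) = q i,
      forall i j, comm (p i) (q j) = (- 'i) *: (i == j)%:R,
      forall i j, comm (p i) (p j) = 0
    & forall i j, comm (q i) (q j) = 0].

Definition hamiltonian (C : numClosedFieldType) (A : algType C) (n : nat)
  (mu kappa gamma : 'M[C]_n) (p q : 'I_n -> A) : A :=
  \sum_(i < n) \sum_(j < n)
     ((2^-1 * mu i j) *: (p i * p j) + (2^-1 * kappa i j) *: (q i * q j)
      + (2^-1 * gamma i j) *: (p i * q j) + (2^-1 * gamma j i) *: (q i * p j)).

Definition real_mx (C : numClosedFieldType) (m n : nat) (X : 'M[C]_(m, n)) :=
  forall i j, X i j \is Num.real.

Definition dirac_diagonalizable (C : numClosedFieldType) (A : algType C)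
  (star : A -> A) (n : nat) (p q : 'I_n -> A) (H : A) :=
  exists (a b : 'M[C]_n) (omega : 'I_n -> C) (c : C),
    let d := fun i => \sum_(k < n) (a i k *: p k + b i k *: q k) in
    [/\ forall i, omega i \is Num.real,
        c \is Num.real,
        forall i j, comm (d i) (star (d j)) = (i == j)%:R,
        forall i j, comm (d i) (d j) = 0
      & H = \sum_(i < n) omega i *: (star (d i) * d i) + c *: 1].

Definition Mmat (C : numClosedFieldType) (n : nat) (mu kappa gamma : 'M[C]_n)
  : 'M[C]_(n + n) := block_mx mu gamma gamma^T kappa.

Definition Sigma_y (C : numClosedFieldType) (n : nat) : 'M[C]_(n + n) :=
  block_mx 0 ((- 'i) %:M) ('i %:M) 0.

Definition dynamic_matrix (C : numClosedFieldType) (n : nat)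
  (mu kappa gamma : 'M[C]_n) : 'M[C]_(n + n) :=
  Sigma_y C n *m Mmat mu kappa gamma.

Definition physically_diagonalizable (C : numClosedFieldType) (m : nat)
  (X : 'M[C]_m) :=
  diagonalizable X /\ (forall z : C, eigenvalue X z -> z \is Num.real).

From HB Require Import structures.
From mathcomp Require Import all_boot all_order all_algebra.
From mathcomp Require Import ring.
Import Order.TTheory GRing.Theory Num.Theory.
Set Implicit Arguments. Unset Strict Implicit. Unset Printing Implicit Defensive.
Local Open Scope ring_scope.

(* Collect the p_i and q_i into one vector R.  Linear forms u.R have scalar
   commutators [u.R, w.R] = u Sigma_y w^T, and as Sigma_y is invertible the map
   u |-> u.R is injective.  The Hamiltonian is the quadratic form R^T M R / 2,
   so [H, u.R] = - (u D).R.  Writing d_i = U_i.R, the Dirac relations say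
   U Sigma_y conj(U)^T = 1 and U Sigma_y U^T = 0, and [H, d_j] = - omega_j d_j
   says U D = diag(omega) U.  Conjugating (M is real and conj(Sigma_y) =
   - Sigma_y) gives conj(U) D = - diag(omega) conj(U); the matrix stacking U
   over conj(U) is invertible, its Sigma_y-pairing with its conjugate being
   diag(1, -1).  So D is similar to the real diagonal diag(omega, - omega). *)

Section Commutator.
Variables (C : numClosedFieldType) (A : algType C).
Implicit Types (x y z : A) (a : C).

Lemma commDl x y z : comm (x + y) z = comm x z + comm y z.
Proof. by rewrite /comm mulrDl mulrDr opprD addrACA. Qed.

Lemma comm_suml m (f : 'I_m -> A) y :
  comm (\sum_(i < m) f i) y = \sum_(i < m) comm (f i) y.
Proof. by rewrite /comm mulr_suml mulr_sumr -sumrB. Qed.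

Lemma comm_sumr m (f : 'I_m -> A) y :
  comm y (\sum_(i < m) f i) = \sum_(i < m) comm y (f i).
Proof. by rewrite /comm mulr_suml mulr_sumr -sumrB. Qed.

Lemma commZl a x y : comm (a *: x) y = a *: comm x y.
Proof. by rewrite /comm -scalerAl -scalerAr scalerBr. Qed.

Lemma commZr a x y : comm x (a *: y) = a *: comm x y.
Proof. by rewrite /comm -scalerAl -scalerAr scalerBr. Qed.

Lemma commMl x y z : comm (x * y) z = x * comm y z + comm x z * y.
Proof. by rewrite /comm mulrBr mulrBl !mulrA addrA subrK. Qed.

Lemma opp_comm x y : - comm x y = comm y x.
Proof. by rewrite /comm opprB. Qed.

Lemma comm_scalar a y : comm a%:A y = 0.
Proof. by rewrite commZl /comm mul1r mulr1 subrr scaler0. Qed.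

Lemma comm_mode_sum m (d d' : 'I_m -> A) (omega : 'I_m -> C) c :
    (forall i j, comm (d i) (d' j) = (i == j)%:R) ->
    (forall i j, comm (d i) (d j) = 0) ->
  forall j, comm (\sum_i omega i *: (d' i * d i) + c%:A) (d j) = - (omega j *: d j).
Proof.
move=> comm_dd' comm_dd j.
have comm_number i : comm (d' i * d i) (d j) = - ((i == j)%:R * d i).
  by rewrite commMl comm_dd mulr0 add0r -opp_comm comm_dd' eq_sym mulNr.
rewrite commDl comm_scalar addr0 comm_suml (bigD1 j) //= big1 ?addr0 => [|i ij].
  by rewrite commZl comm_number eqxx mul1r scalerN.
by rewrite commZl comm_number (negbTE ij) mul0r oppr0 scaler0.
Qed.

End Commutator.

Lemma scalar_alg_inj (C : numClosedFieldType) (A : algType C) :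
  injective (fun a : C => a%:A : A).
Proof. exact: fmorph_inj (in_alg A). Qed.

Definition quad_form (C : numClosedFieldType) (A : algType C) m
    (M : 'M[C]_m) (r : 'I_m -> A) : A :=
  \sum_a \sum_b (2^-1 * M a b) *: (r a * r b).

Lemma comm_quad_form (C : numClosedFieldType) (A : algType C) m
    (M J : 'M[C]_m) (r : 'I_m -> A) :
    M^T = M -> (forall a b, comm (r a) (r b) = (J a b)%:A) ->
  forall c, comm (quad_form M r) (r c) = \sum_a (M *m J) a c *: r a.
Proof.
move=> M_sym r_comm c.
transitivity (\sum_a \sum_b ((2^-1 * M a b * J b c) *: r a
                             + (2^-1 * M a b * J a c) *: r b)).
  rewrite comm_suml; apply: eq_bigr => a _; rewrite comm_suml.
  apply: eq_bigr => b _.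
  by rewrite commZl commMl !r_comm -scalerAr mulr1 -scalerAl mul1r scalerDr !scalerA.
under eq_bigr do rewrite big_split.
rewrite big_split /= [X in _ + X]exchange_big /= -big_split.
apply: eq_bigr => a _; rewrite -big_split mxE scaler_suml /=.
apply: eq_bigr => b _; rewrite -scalerDl; congr (_ *: _).
have -> : M b a = M a b by rewrite -{1}M_sym mxE.
by field.
Qed.

Lemma row_mulmx_trrow (R : pzRingType) m k l (X : 'M[R]_(m, k)) (J : 'M[R]_k)
    (Y : 'M[R]_(l, k)) i j :
  (row i X *m J *m (row j Y)^T) 0 0 = (X *m J *m Y^T) i j.
Proof. by rewrite -row_mul tr_row !mxE; apply: eq_bigr => r _; rewrite !mxE. Qed.

Section SigmaY.
Variables (C : numClosedFieldType) (n : nat).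
Local Notation J := (Sigma_y C n).

Lemma Sigma_y_sqr : J *m J = 1%:M.
Proof.
rewrite /Sigma_y mulmx_block !mulmx0 !mul0mx !addr0 !add0r -!scalar_mxM.
by rewrite mulNr mulrN -expr2 sqrCi opprK scalar_mx_block.
Qed.

Lemma tr_Sigma_y : J^T = - J.
Proof.
by rewrite /Sigma_y tr_block_mx opp_block_mx !tr_scalar_mx trmx0 oppr0 -!raddfN /= opprK.
Qed.

Lemma conj_Sigma_y : map_mx Num.conj J = - J.
Proof.
rewrite /Sigma_y map_block_mx !map_mx0 !map_scalar_mx opp_block_mx oppr0.
by rewrite /= rmorphN /= !conjCi opprK -!(raddfN (@scalar_mx C n)) opprK.
Qed.

End SigmaY.

Section BlockMatrices.
Variables (C : numClosedFieldType) (n : nat) (mu kappa gamma : 'M[C]_n).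

Lemma Mmat_sym : mu^T = mu -> kappa^T = kappa ->
  (Mmat mu kappa gamma)^T = Mmat mu kappa gamma.
Proof. by move=> mu_sym kappa_sym; rewrite /Mmat tr_block_mx mu_sym kappa_sym trmxK. Qed.

Lemma Mmat_real : real_mx mu -> real_mx kappa -> real_mx gamma ->
  map_mx Num.conj (Mmat mu kappa gamma) = Mmat mu kappa gamma.
Proof.
move=> mu_real kappa_real gamma_real; apply/matrixP => a b.
rewrite mxE; apply: conj_Creal; rewrite /Mmat.
by case: (split_ordP a) => i ->; case: (split_ordP b) => j ->;
  rewrite ?block_mxEul ?block_mxEur ?block_mxEdl ?block_mxEdr ?mxE.
Qed.

Lemma conj_dynamic_matrix : real_mx mu -> real_mx kappa -> real_mx gamma ->
  map_mx Num.conj (dynamic_matrix mu kappa gamma) = - dynamic_matrix mu kappa gamma.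
Proof.
by move=> *; rewrite map_mxM conj_Sigma_y Mmat_real // mulNmx.
Qed.

End BlockMatrices.

Section CanonicalPairs.
Variables (C : numClosedFieldType) (A : algType C) (star : A -> A) (n : nat).
Variables (p q : 'I_n -> A).
Hypotheses (star_invol : is_star star) (pq_CCR : CCR star p q).

Definition pq (k : 'I_(n + n)) : A :=
  match split k with inl i => p i | inr i => q i end.

Lemma pq_lshift i : pq (lshift n i) = p i.
Proof. by rewrite /pq (unsplitK (inl _ _)). Qed.

Lemma pq_rshift i : pq (rshift n i) = q i.
Proof. by rewrite /pq (unsplitK (inr _ _)). Qed.

Lemma comm_pq a b : comm (pq a) (pq b) = (Sigma_y C n a b)%:A.
Proof.
case: pq_CCR => _ _ comm_pq comm_pp comm_qq.
case: (split_ordP a) => i ->; case: (split_ordP b) => j ->;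
  rewrite ?pq_lshift ?pq_rshift ?block_mxEul ?block_mxEur ?block_mxEdl
    ?block_mxEdr ?mxE.
- by rewrite comm_pp scale0r.
- by rewrite comm_pq; case: eqP; rewrite ?scaler0 ?scale0r.
- rewrite -opp_comm comm_pq eq_sym.
  by case: eqP; rewrite ?scaler0 ?scale0r ?scaleNr ?opprK ?oppr0.
- by rewrite comm_qq scale0r.
Qed.

Definition lin (u : 'rV[C]_(n + n)) : A := \sum_k u 0 k *: pq k.

Fact lin_is_linear : linear lin.
Proof.
move=> a u v; rewrite /lin scaler_sumr -big_split; apply: eq_bigr => k _.
by rewrite !mxE scalerDl scalerA.
Qed.

HB.instance Definition _ :=
  GRing.isLinear.Build C 'rV[C]_(n + n) A *:%R lin lin_is_linear.

Lemma comm_lin u w : comm (lin u) (lin w) = ((u *m Sigma_y C n *m w^T) 0 0)%:A.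
Proof.
rewrite /lin comm_suml !mxE scaler_suml.
under [RHS]eq_bigr do rewrite !mxE mulr_suml scaler_suml.
rewrite exchange_big; apply: eq_bigr => a _.
rewrite commZl comm_sumr scaler_sumr; apply: eq_bigr => b _.
by rewrite commZr comm_pq !scalerA !mxE; congr (_ *: _); ring.
Qed.

Lemma lin_inj : injective lin.
Proof.
suff lin_eq0 u : lin u = 0 -> u = 0.
  by move=> u v uv; apply/eqP; rewrite -subr_eq0; apply/eqP/lin_eq0; rewrite linearB /= uv subrr.
move=> u0; suff uJ0 : u *m Sigma_y C n = 0.
  by rewrite -[u]mulmx1 -Sigma_y_sqr mulmxA uJ0 mul0mx.
apply/rowP => k; apply: (@scalar_alg_inj C A).
have := comm_lin u (delta_mx 0 k); rewrite u0 /comm mul0r mulr0 subrr.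
by rewrite trmx_delta -colE !mxE scale0r => <-.
Qed.

Lemma star_lin u : star (lin u) = lin (map_mx Num.conj u).
Proof.
case: star_invol => starD starZ _ _; case: pq_CCR => p_herm q_herm _ _ _.
have star0 : star 0 = 0 by apply: (addrI (star 0)); rewrite -starD !addr0.
rewrite /lin (big_morph star starD star0); apply: eq_bigr => k _.
rewrite starZ mxE; congr (_ *: _).
by case: (split_ordP k) => i ->; rewrite ?pq_lshift ?pq_rshift.
Qed.

Lemma hamiltonianE (mu kappa gamma : 'M[C]_n) :
  hamiltonian mu kappa gamma p q = quad_form (Mmat mu kappa gamma) pq.
Proof.
rewrite /quad_form big_split_ord /= -big_split; apply: eq_bigr => i _.
rewrite !big_split_ord /= -!big_split; apply: eq_bigr => j _.
rewrite /Mmat !pq_lshift !pq_rshift block_mxEul block_mxEur block_mxEdl block_mxEdr mxE.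
by rewrite -addrA addrACA [X in _ + X = _]addrC.
Qed.

Lemma comm_hamiltonian_lin (mu kappa gamma : 'M[C]_n) :
    mu^T = mu -> kappa^T = kappa ->
  forall u, comm (hamiltonian mu kappa gamma p q) (lin u)
            = - lin (u *m dynamic_matrix mu kappa gamma).
Proof.
move=> mu_sym kappa_sym u; set M := Mmat mu kappa gamma.
have M_sym : M^T = M by exact: Mmat_sym.
have MJ_tr : (M *m Sigma_y C n)^T = - dynamic_matrix mu kappa gamma.
  by rewrite trmx_mul tr_Sigma_y M_sym mulNmx.
rewrite hamiltonianE /lin comm_sumr.
under eq_bigr do rewrite commZr (comm_quad_form M_sym comm_pq) scaler_sumr.
rewrite exchange_big -sumrN; apply: eq_bigr => a _.
rewrite -scaleNr !mxE -sumrN scaler_suml; apply: eq_bigr => c _.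
have -> : (M *m Sigma_y C n) a c = (- dynamic_matrix mu kappa gamma) c a.
  by rewrite -MJ_tr [RHS]mxE.
by rewrite scalerA mxE mulrN.
Qed.

Lemma lin_row_mx (a b : 'M[C]_n) i :
  \sum_(k < n) (a i k *: p k + b i k *: q k) = lin (row i (row_mx a b)).
Proof.
rewrite /lin big_split_ord big_split /=.
by congr (_ + _); apply: eq_bigr => k _;
  rewrite mxE ?row_mxEl ?row_mxEr ?pq_lshift ?pq_rshift.
Qed.

Lemma dirac_normal_modes (mu kappa gamma : 'M[C]_n) :
    mu^T = mu -> kappa^T = kappa ->
    dirac_diagonalizable star p q (hamiltonian mu kappa gamma p q) ->
  exists (U : 'M[C]_(n, n + n)) (w : 'rV[C]_n),
    [/\ forall i, w 0 i \is Num.real,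
        U *m Sigma_y C n *m (map_mx Num.conj U)^T = 1%:M,
        U *m Sigma_y C n *m U^T = 0
      & U *m dynamic_matrix mu kappa gamma = diag_mx w *m U].
Proof.
move=> mu_sym kappa_sym [a [b [omega [c /= [omega_real _ comm_dd' comm_dd H_modes]]]]].
set U := row_mx a b; exists U, (\row_i omega i).
have comm_dd'U i j : comm (lin (row i U)) (star (lin (row j U))) = (i == j)%:R.
  by rewrite -!lin_row_mx comm_dd'.
have comm_ddU i j : comm (lin (row i U)) (lin (row j U)) = 0.
  by rewrite -!lin_row_mx comm_dd.
split.
- by move=> i; rewrite mxE.
- apply/matrixP => i j; apply: (@scalar_alg_inj C A).
  by rewrite -row_mulmx_trrow -map_row -comm_lin -star_lin comm_dd'U mxE scaler_nat.
- apply/matrixP => i j; apply: (@scalar_alg_inj C A).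
  by rewrite -row_mulmx_trrow -comm_lin comm_ddU mxE scale0r.
apply/row_matrixP => j; apply: lin_inj; apply: oppr_inj.
rewrite row_mul -comm_hamiltonian_lin // H_modes.
rewrite row_mul row_diag_mx -scalemxAl -rowE mxE linearZ.
under eq_bigr do rewrite lin_row_mx.
by rewrite comm_mode_sum.
Qed.

End CanonicalPairs.

Lemma eigenvalue_diag (F : fieldType) n (e : 'rV[F]_n) z :
  eigenvalue (diag_mx e) z -> exists k, z = e 0 k.
Proof.
rewrite eigenvalue_root_char char_poly_trig ?diag_mx_is_trig //.
rewrite -(big_map (fun i => diag_mx e i i) xpredT (fun x => 'X - x%:P)).
by rewrite root_prod_XsubC => /mapP [k _ ->]; exists k; rewrite mxE eqxx.
Qed.

Lemma eigenvalue_simmx_diag (F : fieldType) n (P D : 'M[F]_n) (e : 'rV[F]_n) z :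
  P \in unitmx -> P *m D = diag_mx e *m P ->
  eigenvalue D z -> exists k, z = e 0 k.
Proof.
move=> P_unit /(simmxP P_unit)/(simmxLR P_unit) ->.
move=> Dz; apply: eigenvalue_diag; apply: eigenvalue_conjmx Dz.
  by apply: stablemx_unit; rewrite unitmx_inv.
by rewrite row_free_unit unitmx_inv.
Qed.

Lemma physically_diagonalizable_simmx (C : numClosedFieldType) m (P D : 'M[C]_m)
    (e : 'rV[C]_m) :
    P \in unitmx -> P *m D = diag_mx e *m P -> (forall k, e 0 k \is Num.real) ->
  physically_diagonalizable D.
Proof.
move=> P_unit PD e_real; split.
  by exists P => //; apply/diagonalizable_forPex; exists e; apply/simmxP.
by move=> z /(eigenvalue_simmx_diag P_unit PD) [k ->].
Qed.

Section NormalModes.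
Variables (C : numClosedFieldType) (n : nat) (J D : 'M[C]_(n + n)).
Variables (U : 'M[C]_(n, n + n)) (w : 'rV[C]_n).
Local Notation Ub := (map_mx Num.conj U).
Hypotheses (J_conj : map_mx Num.conj J = - J) (D_conj : map_mx Num.conj D = - D).
Hypotheses (w_real : forall i, w 0 i \is Num.real).
Hypotheses (UJUb : U *m J *m Ub^T = 1%:M) (UJU : U *m J *m U^T = 0).
Hypothesis (UD : U *m D = diag_mx w *m U).

Lemma conj_modes : Ub *m D = diag_mx (- w) *m Ub.
Proof.
have w_conj : map_mx Num.conj w = w by apply/rowP => i; rewrite mxE conj_Creal.
have := congr1 (map_mx Num.conj) UD; rewrite !map_mxM D_conj map_diag_mx w_conj.
by rewrite mulmxN => /eqP; rewrite eqr_oppLR => /eqP ->; rewrite -mulNmx raddfN.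
Qed.

Lemma modes_unit : col_mx U Ub \in unitmx.
Proof.
have UbJUb : Ub *m J *m Ub^T = 0.
  apply/eqP; rewrite -oppr_eq0 -mulNmx -mulmxN -J_conj map_trmx -!map_mxM.
  by rewrite UJU map_mx0.
have UbJU : Ub *m J *m U^T = - 1%:M.
  apply: oppr_inj; rewrite opprK -mulNmx -mulmxN -J_conj -[U in U^T]map_mxCK.
  by rewrite map_trmx -!map_mxM UJUb map_mx1.
(* The pairing of P := col_mx U Ub with its conjugate is S, an involution,
   so J conj(P)^T S inverts P. *)
pose S : 'M[C]_(n + n) := block_mx 1%:M 0 0 (- 1%:M).
suff /mulmx1_unit [] : col_mx U Ub *m (J *m (map_mx Num.conj (col_mx U Ub))^T *m S)
  = 1%:M by [].
rewrite !mulmxA map_col_mx map_mxCK tr_col_mx mul_col_mx mul_col_row.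
rewrite UJUb UJU UbJUb UbJU /S mulmx_block !mulmx0 !mul0mx !addr0 !add0r.
by rewrite mulmx1 mulmxN mulmx1 opprK scalar_mx_block.
Qed.

Lemma normal_modes_physically_diagonalizable : physically_diagonalizable D.
Proof.
apply: (physically_diagonalizable_simmx (e := row_mx w (- w)) modes_unit).
  by rewrite mul_col_mx diag_mx_row mul_block_col !mul0mx addr0 add0r UD conj_modes.
by move=> k; case: (split_ordP k) => i ->; rewrite ?row_mxEl ?row_mxEr ?mxE ?realN.
Qed.

End NormalModes.

Theorem proposition8 (C : numClosedFieldType) (A : algType C) (star : A -> A)
  (n : nat) (mu kappa gamma : 'M[C]_n) (p q : 'I_n -> A) :
  is_star star ->
  real_mx mu -> real_mx kappa -> real_mx gamma ->
  mu^T = mu -> kappa^T = kappa ->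
  CCR star p q ->
  dirac_diagonalizable star p q (hamiltonian mu kappa gamma p q) ->
  physically_diagonalizable (dynamic_matrix mu kappa gamma).
Proof.
move=> star_invol mu_real kappa_real gamma_real mu_sym kappa_sym pq_CCR H_dirac.
have [U [w [w_real UJUb UJU UD]]] :=
  dirac_normal_modes star_invol pq_CCR mu_sym kappa_sym H_dirac.
exact: normal_modes_physically_diagonalizable (conj_Sigma_y C n)
  (conj_dynamic_matrix mu_real kappa_real gamma_real) w_real UJUb UJU UD.
Qed.
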